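(* Fix $a\in(0,\tfrac12)$ and $E\in[0,1]$. Suppose there exist $\lambda_1<\lambda_2<0$ such that the $\Theta$-flow described in the context has corridors $\mathcal K_1(E,\lambda_1)$ and $\mathcal K_1(E,\lambda_2)$ with $w(\mathcal K_1(E,\lambda_2))=0$ and $w(\mathcal K_1(E,\lambda_1))\ge1$. Then there is $\lambda\in(\lambda_1,\lambda_2)$ such that the $\Theta$-flow with parameters $(E,\lambda)$ has a saddles connector going from $(0,0)$ to $(\pi,-\pi)$.
   Context: For $a\in(0,\tfrac12)$, $E\in[0,1]$, $\lambda\in\mathbb R$, the $\Theta$-flow is the system on the strip $[0,\pi]\times\mathbb R$ (with $\Theta$ understood mod $2\pi$ on the cylinder) $$\dot\theta=\sin\theta,\qquad \dot\Theta=-2a\sin\theta\cos\theta\cos\Theta+2aE\sin^2\theta\sin\Theta-\sin\Theta+2\lambda\sin\theta.$$ Its equilibria are $(0,0)$, $(0,\pi)$ (left) and $(\pi,-\pi)$, $(\pi,0)$ (right), mod $2\pi$ in $\Theta$. Let $\widetilde{\mathcal W}^-$ be the unique orbit in $(0,\pi)\times\mathbb R$ with $\alpha$-limit $(0,0)$ and $\widetilde{\mathcal W}^+$ the unique orbit with $\omega$-limit $(\pi,-\pi)$. A saddles connector from $(0,0)$ to $(\pi,-\pi)$ is an orbit with $\alpha$-limit $(0,0)$ and $\omega$-limit $(\pi,-\pi)$. The flow has a corridor $\mathcal K_1(E,\lambda)$ of winding number $k\in\mathbb Z$ if $\widetilde{\mathcal W}^-\neq\widetilde{\mathcal W}^+$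 and the $\omega$-limit of $\widetilde{\mathcal W}^-$ is $(\pi,-2\pi k)$. *)

From Stdlib Require Import Reals.
From Coquelicot Require Import Coquelicot.
Open Scope R_scope.

(* Right-hand side of the Theta-equation of the Theta-flow, in the lifted
   coordinates (theta, Theta) in [0,pi] x R (Theta NOT reduced mod 2pi). *)
Definition Theta_rhs (a E lam th Th : R) : R :=
  - 2 * a * sin th * cos th * cos Th + 2 * a * E * (sin th)^2 * sin Th
  - sin Th + 2 * lam * sin th.

(* A (global, time-parametrized) trajectory of the Theta-flow.  The vector
   field is smooth and bounded, so every maximal solution is defined on R;
   an orbit is the image of such a solution. *)
Definition is_traj (a E lam : R) (th Th : R -> R) : Prop :=
  forall t, is_derive th t (sin (th t)) /\
            is_derive Th t (Theta_rhs a E lam (th t) (Th t)).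

Definition in_open_strip (th : R -> R) : Prop :=
  forall t, 0 < th t < PI.

Definition alpha_lim (th Th : R -> R) (p1 p2 : R) : Prop :=
  is_lim th m_infty p1 /\ is_lim Th m_infty p2.
Definition omega_lim (th Th : R -> R) (p1 p2 : R) : Prop :=
  is_lim th p_infty p1 /\ is_lim Th p_infty p2.

Definition is_Wminus (a E lam : R) (th Th : R -> R) : Prop :=
  is_traj a E lam th Th /\ in_open_strip th /\ alpha_lim th Th 0 0.
Definition is_Wplus (a E lam : R) (th Th : R -> R) : Prop :=
  is_traj a E lam th Th /\ in_open_strip th /\ omega_lim th Th PI (- PI).

Definition orbit (th Th : R -> R) : R * R -> Prop :=
  fun p => exists t, p = (th t, Th t).

(* The flow with parameters (E,lam) has a corridor K_1(E,lam) of winding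
   number k: W~^- exists, W~^- <> W~^+, and the omega-limit of W~^- is
   (pi, -2 pi k).  (W~^- is stated to be unique in the paper; we require the
   omega-limit property for every trajectory with alpha-limit (0,0).) *)
Definition corridor_K1 (a E lam : R) (k : Z) : Prop :=
  (exists th Th, is_Wminus a E lam th Th) /\
  (forall th Th th' Th', is_Wminus a E lam th Th -> is_Wplus a E lam th' Th' ->
       orbit th Th <> orbit th' Th') /\
  (forall th Th, is_Wminus a E lam th Th ->
       omega_lim th Th PI (- 2 * PI * IZR k)).

Definition saddles_connector (a E lam : R) : Prop :=
  exists th Th, is_traj a E lam th Th /\
    alpha_lim th Th 0 0 /\ omega_lim th Th PI (- PI).

(* Along the explicit solution [theta t = 2 atan (exp t)] of [theta' = sin theta], the
   [Theta]-equation becomes the scalar non-autonomous ODE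
   [Theta' = - sin Theta + sin (theta t) * G_lam (t, Theta)], whose perturbation term decays
   exponentially as [t -> +-oo].  [W~^-] is the locally uniform limit [W lam] of the solutions
   vanishing at time [-n] (each built by Picard iteration): near [-oo] the term [- sin Theta]
   makes solutions contract, which yields both the convergence and a Lipschitz dependence of
   [W lam T] on [lam].  Near [+oo] the lines [Theta = - pi +- eta] are barriers, so "[W lam]
   ends above [-pi]" and "[W lam] ends below [-pi]" are disjoint open conditions on [lam].  The
   corridors put [lam2] in the first set and [lam1] in the second; by connectedness some
   [lam] in between lies in neither, and then [W lam] tends to [-pi]: a saddles connector. *)

From Stdlib Require Import Reals Lra Lia Factorial.
From Coquelicot Require Import Coquelicot.
Open Scope R_scope.

Lemma continuous_eps (g : R -> R) (x : R) :
  continuous g x <-> (forall eps, 0 < eps -> exists del, 0 < del /\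
     forall y, Rabs (y - x) < del -> Rabs (g y - g x) < eps).
Proof.
  change (continuous g x) with (filterlim g (locally x) (locally (g x))).
  rewrite <- continuity_pt_filterlim.
  unfold continuity_pt, continue_in, limit1_in, limit_in, D_x, no_cond; simpl.
  unfold R_dist. split.
  - intros H eps Heps. destruct (H eps Heps) as [d [Hd H2]].
    exists d; split; auto. intros y Hy.
    destruct (Req_dec y x) as [->|Hne].
    + rewrite Rminus_eq_0, Rabs_R0; lra.
    + apply H2; split; auto.
  - intros H eps Heps. destruct (H eps Heps) as [d [Hd H2]].
    exists d; split; auto. intros y [_ Hy]. apply H2; auto.
Qed.

Lemma deriv_nonpos_nonincreasing (h dh : R -> R) (a b : R) : a <= b ->
  continuous h a ->
  (forall x, a < x <= b -> is_derive h x (dh x)) ->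
  (forall x, a < x < b -> dh x <= 0) -> h b <= h a.
Proof.
  intros Hab Hc Hd Hn.
  destruct (Req_dec a b) as [->|Hne]; [lra|].
  apply Rnot_lt_le; intro Hlt.
  apply continuous_eps with (eps := h b - h a) in Hc as [d [Hd0 Hc]]; [|lra].
  set (a' := Rmin (a + d/2) ((a+b)/2)).
  assert (Ha' : a < a' < b).
  { unfold a'; split; [apply Rmin_glb_lt; lra|].
    eapply Rle_lt_trans; [apply Rmin_r|lra]. }
  assert (Hmvt : h b <= h a').
  { destruct (MVT_cor2 h dh a' b) as [c [Hc1 Hc2]]; [lra| |].
    - intros c Hc'. apply is_derive_Reals, Hd. lra.
    - assert (dh c * (b - a') <= 0) by (apply Rmult_le_0_r; [apply Hn|]; lra).
      lra. }
  assert (Rabs (h a' - h a) < h b - h a).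
  { apply Hc. rewrite Rabs_right by lra. unfold a'.
    eapply Rle_lt_trans; [apply Rplus_le_compat_r, Rmin_l|lra]. }
  apply Rabs_def2 in H. lra.
Qed.

Lemma is_derive_pos_lt_left (u : R -> R) x d : is_derive u x d -> 0 < d ->
  exists del, 0 < del /\ forall r, x - del < r < x -> u r < u x.
Proof.
  intros H Hd. apply is_derive_Reals in H.
  destruct (H d Hd) as [del Hdel].
  exists (pos del); split; [apply cond_pos|].
  intros r Hr. specialize (Hdel (r - x) ltac:(lra)).
  rewrite Rabs_left in Hdel by lra. specialize (Hdel ltac:(lra)).
  replace (x + (r - x)) with r in Hdel by ring.
  apply Rabs_lt_between in Hdel.
  set (q := (u r - u x) / (r - x)) in Hdel.
  assert (E : u r - u x = q * (r - x)) by (unfold q; field; lra).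
  nra.
Qed.

(* The crossing time is the supremum of the times up to which [u] stays above [b]. *)
Lemma first_crossing (u : R -> R) (T0 t b : R) :
  (forall x, continuous u x) -> b < u T0 -> T0 <= t -> u t <= b ->
  exists x, T0 < x <= t /\ u x = b /\ forall r, T0 <= r < x -> b < u r.
Proof.
  intros Hc H0 Ht Hbad.
  set (S := fun s => T0 <= s <= t /\ forall r, T0 <= r <= s -> b < u r).
  assert (HS0 : S T0) by (split; [lra|]; intros r Hr; replace r with T0 by lra; auto).
  destruct (completeness S) as [x [Hub Hlub]];
    [exists t; intros s [Hs _]; lra | exists T0; auto |].
  assert (HxT0 : T0 <= x) by (apply Hub; auto).
  assert (Hxt : x <= t) by (apply Hlub; intros s [Hs _]; lra).
  assert (Hbelow : forall r, T0 <= r < x -> b < u r).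
  { intros r Hr. destruct (Classical_Prop.classic (exists s, S s /\ r < s))
      as [[s [[_ Hs] Hrs]]|Hno]; [apply Hs; lra|].
    exfalso. assert (x <= r); [|lra]. apply Hlub. intros s Hs.
    apply Rnot_lt_le; intro; apply Hno; eauto. }
  assert (Hge : b <= u x).
  { apply Rnot_lt_le; intro Hlt.
    destruct (Req_dec x T0) as [->|Hne]; [lra|].
    destruct (proj1 (continuous_eps u x) (Hc x) (b - u x)) as [d [Hd0 Hd1]]; [lra|].
    set (r := Rmax T0 (x - d/2)).
    assert (Hr : T0 <= r < x) by (unfold r; split; [apply Rmax_l|apply Rmax_lub_lt; lra]).
    assert (Rabs (r - x) < d).
    { rewrite Rabs_left by lra. pose proof (Rmax_r T0 (x - d/2)). fold r in H. lra. }
    specialize (Hd1 r H). apply Rabs_lt_between in Hd1. specialize (Hbelow r Hr). lra. }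
  assert (Hle : u x <= b).
  { apply Rnot_lt_le; intro Hlt.
    assert (Hxt' : x < t) by (destruct (Req_dec x t) as [->|]; lra).
    destruct (proj1 (continuous_eps u x) (Hc x) (u x - b)) as [d [Hd0 Hd1]]; [lra|].
    set (s := Rmin t (x + d/2)).
    assert (Hs : x < s <= t) by (unfold s; split; [apply Rmin_glb_lt; lra|apply Rmin_l]).
    assert (s <= x); [|lra]. apply Hub. split; [lra|].
    intros r Hr. destruct (Rlt_le_dec r x) as [Hrx|Hrx]; [apply Hbelow; lra|].
    assert (Rabs (r - x) < d).
    { apply Rabs_lt_between. pose proof (Rmin_r t (x + d/2)). fold s in H. lra. }
    specialize (Hd1 r H). apply Rabs_lt_between in Hd1. lra. }
  exists x. repeat split; [destruct (Req_dec x T0) as [->|]; lra | lra | lra | exact Hbelow].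
Qed.

Lemma stays_above (u du : R -> R) (T0 T1 b : R) :
  (forall x, continuous u x) ->
  (forall x, T0 < x <= T1 -> is_derive u x (du x)) ->
  (forall x, T0 < x <= T1 -> u x = b -> 0 < du x) ->
  b < u T0 -> forall t, T0 <= t <= T1 -> b < u t.
Proof.
  intros Hc Hd Hp H0 t Ht. apply Rnot_le_lt; intro Hbad.
  destruct (first_crossing u T0 t b Hc H0 ltac:(lra) Hbad) as [x [Hx [Hux Hbelow]]].
  destruct (is_derive_pos_lt_left u x (du x) (Hd x ltac:(lra)) (Hp x ltac:(lra) Hux))
    as [d [Hd0 Hd1]].
  set (r := Rmax T0 (x - d/2)).
  assert (Hr : T0 <= r < x) by (unfold r; split; [apply Rmax_l|apply Rmax_lub_lt; lra]).
  assert (x - d < r) by (pose proof (Rmax_r T0 (x - d/2)); fold r in H; lra).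
  specialize (Hd1 r ltac:(lra)). specialize (Hbelow r Hr). lra.
Qed.

Lemma stays_below (u du : R -> R) (T0 T1 b : R) :
  (forall x, continuous u x) ->
  (forall x, T0 < x <= T1 -> is_derive u x (du x)) ->
  (forall x, T0 < x <= T1 -> u x = b -> du x < 0) ->
  u T0 < b -> forall t, T0 <= t <= T1 -> u t < b.
Proof.
  intros Hc Hd Hp H0 t Ht.
  assert (- b < - u t); [|lra].
  apply (stays_above (fun x => - u x) (fun x => - du x) T0 T1 (- b)); auto; try lra.
  - intros x. apply (continuous_opp (V:=R_NormedModule) u); auto.
  - intros x Hx. apply (is_derive_opp (K:=R_AbsRing) (V:=R_NormedModule) u). auto.
  - intros x Hx He. assert (du x < 0) by (apply Hp; auto; lra). lra.
Qed.

Lemma ex_RInt_cont (g : R -> R) a b : (forall y, continuous g y) -> ex_RInt g a b.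
Proof. intros; apply (ex_RInt_continuous (V:=R_CompleteNormedModule)); auto. Qed.

Lemma is_derive_RInt_cont (g : R -> R) (a x : R) :
  (forall y, continuous g y) -> is_derive (fun t => RInt g a t) x (g x).
Proof.
  intros Hg. apply is_derive_RInt with (a := a); auto.
  exists (mkposreal 1 Rlt_0_1). intros y _. apply RInt_correct, ex_RInt_cont; auto.
Qed.

Lemma continuous_RInt (g : R -> R) (a x : R) :
  (forall y, continuous g y) -> continuous (fun t => RInt g a t) x.
Proof.
  intros Hg. apply (ex_derive_continuous (K:=R_AbsRing) (V:=R_NormedModule)).
  eexists. apply is_derive_RInt_cont; auto.
Qed.

Lemma continuous_Rmax_l (c x : R) : continuous (fun t => Rmax c t) x.
Proof.
  apply continuous_eps. intros eps Heps. exists eps; split; auto.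
  intros y Hy. unfold Rmax. destruct (Rle_dec c y), (Rle_dec c x);
  rewrite ?Rminus_eq_0, ?Rabs_R0; try lra; apply Rabs_lt_between in Hy;
  apply Rabs_lt_between; lra.
Qed.

Lemma abs_RInt_minus_le (g h : R -> R) a b eps : a <= b ->
  (forall y, continuous g y) -> (forall y, continuous h y) ->
  (forall s, a <= s <= b -> Rabs (g s - h s) <= eps) ->
  Rabs (RInt g a b - RInt h a b) <= (b - a) * eps.
Proof.
  intros Hab Hg Hh Hb.
  rewrite <- (RInt_minus g h) by (apply ex_RInt_cont; auto).
  apply abs_RInt_le_const; auto.
  apply ex_RInt_cont. intros y. apply (continuous_minus g h); auto.
Qed.

Lemma Rabs_lim_seq_le (x : nat -> R) (l b : R) : is_lim_seq x l ->
  (exists N, forall n, (N <= n)%nat -> Rabs (x n) <= b) -> Rabs l <= b.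
Proof.
  intros Hx [N HN].
  apply (is_lim_seq_le_loc (fun n => Rabs (x n)) (fun _ => b) (Rabs l) b).
  - exists N. exact HN.
  - apply (is_lim_seq_abs _ l Hx).
  - apply is_lim_seq_const.
Qed.

Definition ucauchy (u : nat -> R -> R) := forall A eps, 0 < eps -> exists N,
  forall n m, (N <= n)%nat -> (N <= m)%nat -> forall t, Rabs t <= A ->
  Rabs (u n t - u m t) <= eps.

Definition unif_lim (u : nat -> R -> R) (U : R -> R) := forall A eps, 0 < eps ->
  exists N, forall n, (N <= n)%nat -> forall t, Rabs t <= A -> Rabs (u n t - U t) <= eps.

Definition lim_fun (u : nat -> R -> R) (t : R) : R := real (Lim_seq (fun n => u n t)).

Lemma unif_lim_shift u U m : unif_lim u U -> unif_lim (fun n => u (n + m)%nat) U.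
Proof.
  intros Hu A eps Heps. destruct (Hu A eps Heps) as [N HN].
  exists N. intros n Hn. apply HN. lia.
Qed.

Lemma unif_lim_continuous u U : unif_lim u U ->
  (forall n x, continuous (u n) x) -> forall x, continuous U x.
Proof.
  intros Hu Hc x. apply continuous_eps. intros eps Heps.
  destruct (Hu (Rabs x + 1) (eps/3)) as [N HN]; [lra|].
  destruct (proj1 (continuous_eps _ _) (Hc N x) (eps/3)) as [d [Hd Hd2]]; [lra|].
  exists (Rmin d 1); split; [apply Rmin_glb_lt; lra|].
  intros y Hy.
  assert (Hy1 : Rabs (y - x) < d) by (eapply Rlt_le_trans; [apply Hy|apply Rmin_l]).
  assert (Hy2 : Rabs (y - x) < 1) by (eapply Rlt_le_trans; [apply Hy|apply Rmin_r]).
  assert (Ay : Rabs y <= Rabs x + 1).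
  { replace y with ((y - x) + x) by ring. eapply Rle_trans; [apply Rabs_triang|lra]. }
  assert (H1 := HN N (Nat.le_refl _) y Ay).
  assert (H2 := HN N (Nat.le_refl _) x ltac:(lra)).
  assert (H3 := Hd2 y Hy1).
  replace (U y - U x) with (-(u N y - U y) + (u N y - u N x) + (u N x - U x)) by ring.
  eapply Rle_lt_trans; [apply Rabs_triang|].
  eapply Rle_lt_trans; [apply Rplus_le_compat_r, Rabs_triang|].
  rewrite Rabs_Ropp. lra.
Qed.

Section UniformCauchy.
Variable u : nat -> R -> R.
Hypothesis Hu : ucauchy u.

Lemma ucauchy_lim t : is_lim_seq (fun n => u n t) (lim_fun u t).
Proof.
  assert (Hc : Cauchy_crit (fun n => u n t)).
  { intros eps Heps. destruct (Hu (Rabs t) (eps/2)) as [N HN]; [lra|].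
    exists N. intros n m Hn Hm. unfold R_dist.
    eapply Rle_lt_trans; [apply HN; auto; lra|lra]. }
  destruct (Stdlib.Reals.Rcomplete.R_complete _ Hc) as [l Hl].
  unfold lim_fun. rewrite (is_lim_seq_unique _ l); simpl; apply is_lim_seq_Reals; auto.
Qed.

Lemma ucauchy_unif_lim : unif_lim u (lim_fun u).
Proof.
  intros A eps Heps. destruct (Hu A eps Heps) as [N HN]. exists N.
  intros n Hn t Ht.
  apply (Rabs_lim_seq_le (fun m => u n t - u m t)).
  - apply (is_lim_seq_minus' _ _ (u n t) (lim_fun u t));
      [apply is_lim_seq_const | apply ucauchy_lim].
  - exists N. intros m Hm. apply HN; auto.
Qed.

End UniformCauchy.

(* Telescoping: [u (n + S d) - u n] is bounded by a partial sum of [c]. *)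
Lemma ucauchy_of_series (u : nat -> R -> R) :
  (forall A, exists c : nat -> R, ex_series c /\
     forall n t, Rabs t <= A -> Rabs (u (S n) t - u n t) <= c n) ->
  ucauchy u.
Proof.
  intros Hs A eps Heps. destruct (Hs A) as [c [Hc Hb]].
  destruct (Cauchy_ex_series c Hc (mkposreal eps Heps)) as [N HN].
  assert (Tele : forall n d t, Rabs t <= A ->
    Rabs (u (n + S d)%nat t - u n t) <= sum_n_m c n (n + d)).
  { intros n d t Ht. induction d.
    - rewrite Nat.add_0_r, sum_n_n, Nat.add_1_r. auto.
    - replace (n + S (S d))%nat with (S (n + S d)) by lia.
      replace (n + S d)%nat with (S (n + d)) at 2 by lia.
      rewrite (sum_n_Sm c n (n + d)) by lia. replace (S (n + d)) with (n + S d)%nat by lia.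
      replace (u (S (n + S d)) t - u n t) with
        ((u (S (n + S d)) t - u (n + S d)%nat t) + (u (n + S d)%nat t - u n t)) by ring.
      eapply Rle_trans; [apply Rabs_triang|]. unfold plus; simpl.
      specialize (Hb (n + S d)%nat t Ht). lra. }
  assert (Main : forall n m, (N <= n)%nat -> (n <= m)%nat -> forall t, Rabs t <= A ->
    Rabs (u m t - u n t) <= eps).
  { intros n m Hn Hm t Ht. destruct (Nat.eq_dec n m) as [<-|Hne].
    - rewrite Rminus_eq_0, Rabs_R0. lra.
    - replace m with (n + S (m - n - 1))%nat by lia.
      eapply Rle_trans; [apply Tele; auto|].
      specialize (HN n (n + (m - n - 1))%nat Hn ltac:(lia)).
      left. eapply Rle_lt_trans; [apply Rle_abs|apply HN]. }
  exists N. intros n m Hn Hm t Ht.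
  destruct (Nat.le_ge_cases n m) as [Hnm|Hnm].
  - rewrite Rabs_minus_sym. apply Main; auto.
  - apply Main; auto.
Qed.

Lemma interval_not_covered (P Q : R -> Prop) (l1 l2 : R) : l1 <= l2 -> P l1 -> Q l2 ->
  (forall l, l1 <= l <= l2 -> P l -> Q l -> False) ->
  (forall l, l1 <= l <= l2 -> P l -> exists r, 0 < r /\
     forall m, l1 <= m <= l2 -> Rabs (m - l) < r -> P m) ->
  (forall l, l1 <= l <= l2 -> Q l -> exists r, 0 < r /\
     forall m, l1 <= m <= l2 -> Rabs (m - l) < r -> Q m) ->
  exists l, l1 < l < l2 /\ ~ P l /\ ~ Q l.
Proof.
  intros H12 P1 Q2 Hdisj HPo HQo.
  set (S := fun l => l1 <= l <= l2 /\ P l).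
  destruct (completeness S) as [s [Hub Hlub]];
    [exists l2; intros l [Hl _]; lra | exists l1; split; [lra|auto] |].
  assert (Hs : l1 <= s <= l2) by (split; [apply Hub; split; [lra|auto] | apply Hlub; intros l [Hl _]; lra]).
  assert (NQ : ~ Q s).
  { intros HQ. destruct (HQo s Hs HQ) as [r [Hr Hop]].
    assert (s <= s - r / 2); [|lra]. apply Hlub. intros l [Hl HPl].
    apply Rnot_lt_le; intro Hlt. assert (l <= s) by (apply Hub; split; auto).
    apply (Hdisj l Hl HPl), Hop; auto. rewrite Rabs_left1 by lra. lra. }
  assert (NP : ~ P s).
  { intros HP. destruct (Req_dec s l2) as [->|Hne]; [exact (Hdisj l2 ltac:(lra) HP Q2)|].
    destruct (HPo s Hs HP) as [r [Hr Hop]].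
    set (p := Rmin (s + r / 2) l2).
    assert (Hp : s < p <= l2) by (unfold p; split; [apply Rmin_glb_lt|apply Rmin_r]; lra).
    assert (p <= s); [|lra]. apply Hub. split; [lra|]. apply Hop; [lra|].
    rewrite Rabs_right by lra. pose proof (Rmin_l (s + r / 2) l2). fold p in H. lra. }
  exists s. split; [|auto].
  split; [destruct (Req_dec s l1) as [->|]; [contradiction|lra]
         |destruct (Req_dec s l2) as [->|]; [contradiction|lra]].
Qed.

Definition eventually_above (g : R -> R) (c : R) :=
  exists eta, 0 < eta /\ exists T, forall t, T <= t -> c + eta < g t.

Definition eventually_below (g : R -> R) (c : R) :=
  exists eta, 0 < eta /\ exists T, forall t, T <= t -> g t < c - eta.

Lemma eventually_above_of_lim (g : R -> R) (l c : R) : is_lim g p_infty l -> c < l -> eventually_above g c.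
Proof.
  intros Hg Hc. apply is_lim_spec in Hg.
  destruct (Hg (mkposreal ((l - c) / 2) ltac:(lra))) as [M HM].
  exists ((l - c) / 2). split; [lra|]. exists (M + 1). intros t Ht.
  specialize (HM t ltac:(lra)). simpl in HM. apply Rabs_lt_between in HM. lra.
Qed.

Lemma eventually_below_of_lim (g : R -> R) (l c : R) : is_lim g p_infty l -> l < c -> eventually_below g c.
Proof.
  intros Hg Hc. apply is_lim_spec in Hg.
  destruct (Hg (mkposreal ((c - l) / 2) ltac:(lra))) as [M HM].
  exists ((c - l) / 2). split; [lra|]. exists (M + 1). intros t Ht.
  specialize (HM t ltac:(lra)). simpl in HM. apply Rabs_lt_between in HM. lra.
Qed.

Lemma eventually_above_below g c : eventually_above g c -> eventually_below g c -> False.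
Proof.
  intros [e1 [He1 [T1 H1]]] [e2 [He2 [T2 H2]]].
  specialize (H1 (Rmax T1 T2) (Rmax_l _ _)). specialize (H2 (Rmax T1 T2) (Rmax_r _ _)). lra.
Qed.

Section IntegralEquation.
Variable f : R -> R -> R.
Variable L : R.
Hypothesis HL : 0 < L.
Hypothesis Hlip : forall t y z, Rabs (f t y - f t z) <= L * Rabs (y - z).
Hypothesis Hct : forall y t, continuous (fun s => f s y) t.

Lemma continuous_f_comp (u : R -> R) : (forall x, continuous u x) ->
  forall x, continuous (fun s => f s (u s)) x.
Proof.
  intros Hu x. apply continuous_eps. intros eps Heps.
  destruct (proj1 (continuous_eps _ _) (Hct (u x) x) (eps/2)) as [d1 [Hd1 H1]]; [lra|].
  destruct (proj1 (continuous_eps _ _) (Hu x) (eps/(2*L))) as [d2 [Hd2 H2]].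
  { apply Rdiv_lt_0_compat; lra. }
  exists (Rmin d1 d2); split; [apply Rmin_glb_lt; auto|].
  intros y Hy.
  assert (A1 : Rabs (f y (u x) - f x (u x)) < eps/2).
  { apply H1. eapply Rlt_le_trans; [apply Hy|apply Rmin_l]. }
  assert (A2 : Rabs (u y - u x) < eps/(2*L)).
  { apply H2. eapply Rlt_le_trans; [apply Hy|apply Rmin_r]. }
  assert (A3 : Rabs (f y (u y) - f y (u x)) <= L * (eps/(2*L))).
  { eapply Rle_trans; [apply Hlip|]. apply Rmult_le_compat_l; lra. }
  replace (L * (eps / (2*L))) with (eps/2) in A3 by (field; lra).
  replace (f y (u y) - f x (u x)) with ((f y (u y) - f y (u x)) + (f y (u x) - f x (u x))) by ring.
  eapply Rle_lt_trans; [apply Rabs_triang|]. lra.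
Qed.

Lemma zero_of_small (x C : R) : 0 <= C -> (forall eps, 0 < eps -> Rabs x <= C * eps) -> x = 0.
Proof.
  intros HC H. destruct (Req_dec x 0) as [|Hne]; auto. exfalso.
  assert (Hx : 0 < Rabs x) by (apply Rabs_pos_lt; auto).
  assert (Hq : 0 < Rabs x / (2 * (C + 1))) by (apply Rdiv_lt_0_compat; lra).
  specialize (H _ Hq).
  assert (C * (Rabs x / (2 * (C + 1))) < Rabs x); [|lra].
  apply Rmult_lt_reg_r with (2 * (C + 1)); [lra|].
  replace (C * (Rabs x / (2 * (C + 1))) * (2 * (C + 1))) with (C * Rabs x) by (field; lra).
  nra.
Qed.

Lemma inteq_unif_lim (u v : nat -> R -> R) (U : R -> R) (a : R) :
  unif_lim u U -> unif_lim v U -> (forall n x, continuous (v n) x) ->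
  (forall n s, a <= s -> u n s = u n a + RInt (fun r => f r (v n r)) a s) ->
  forall s, a <= s -> U s = U a + RInt (fun r => f r (U r)) a s.
Proof.
  intros Hu Hv Hvc Heq s Has.
  assert (HU := unif_lim_continuous v U Hv Hvc).
  assert (Hz : U s - U a - RInt (fun r => f r (U r)) a s = 0); [|lra].
  apply zero_of_small with (C := 2 + (s - a) * L); [nra|].
  intros eps Heps.
  destruct (Hu (Rabs a + Rabs s) eps Heps) as [N1 H1].
  destruct (Hv (Rabs a + Rabs s) eps Heps) as [N2 H2].
  set (n := max N1 N2).
  pose proof (Rabs_pos a). pose proof (Rabs_pos s).
  assert (B1 := H1 n ltac:(unfold n; lia) s ltac:(lra)).
  assert (B2 := H1 n ltac:(unfold n; lia) a ltac:(lra)).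
  assert (B3 : Rabs (RInt (fun r => f r (v n r)) a s - RInt (fun r => f r (U r)) a s)
               <= (s - a) * (L * eps)).
  { apply abs_RInt_minus_le; auto; try (apply continuous_f_comp; auto).
    intros r Hr. eapply Rle_trans; [apply Hlip|]. apply Rmult_le_compat_l; [lra|].
    apply H2; [unfold n; lia|].
    apply Rabs_le. pose proof (Rle_abs a); pose proof (Rle_abs s);
      pose proof (Rabs_maj2 a); pose proof (Rabs_maj2 s). lra. }
  replace (U s - U a - RInt (fun r => f r (U r)) a s) with
    (-(u n s - U s) + (u n a - U a) +
     (RInt (fun r => f r (v n r)) a s - RInt (fun r => f r (U r)) a s))
    by (rewrite (Heq n s Has); ring).
  eapply Rle_trans; [apply Rabs_triang|].
  eapply Rle_trans; [apply Rplus_le_compat_r, Rabs_triang|].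
  rewrite Rabs_Ropp. nra.
Qed.

Lemma is_derive_of_inteq (U : R -> R) (a c x : R) :
  (forall x, continuous U x) ->
  (forall s, a <= s -> U s = c + RInt (fun r => f r (U r)) a s) ->
  a < x -> is_derive U x (f x (U x)).
Proof.
  intros HU Heq Hx.
  apply (is_derive_ext_loc (fun s => c + RInt (fun r => f r (U r)) a s)).
  - exists (mkposreal (x - a) ltac:(lra)). intros y Hy.
    unfold ball in Hy; simpl in Hy; unfold AbsRing_ball, abs, minus, plus, opp in Hy; simpl in Hy.
    apply Rabs_lt_between in Hy. symmetry; apply Heq. lra.
  - replace (f x (U x)) with (plus zero (f x (U x))) by (unfold plus, zero; simpl; ring).
    apply (is_derive_plus (K:=R_AbsRing) (V:=R_NormedModule) (fun _ => c)).
    + apply (is_derive_const (K:=R_AbsRing) (V:=R_NormedModule)).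
    + apply (is_derive_RInt_cont (fun r => f r (U r))). apply continuous_f_comp; auto.
Qed.

Variable M : R.
Hypothesis Hbnd : forall t y, Rabs (f t y) <= M.
Variables t0 y0 : R.

(* Picard iterates, frozen at [y0] before [t0] so that they are defined on all of [R]. *)
Fixpoint picard (n : nat) (t : R) : R :=
  match n with
  | O => y0
  | S k => y0 + RInt (fun s => f s (picard k s)) t0 (Rmax t0 t)
  end.

Lemma picard_continuous n : forall x, continuous (picard n) x.
Proof.
  induction n; intros x; simpl.
  - apply continuous_const.
  - apply (continuous_plus (fun _ => y0)); [apply continuous_const|].
    apply (continuous_comp (fun t => Rmax t0 t) (fun t => RInt (fun s => f s (picard n s)) t0 t)).
    + apply continuous_Rmax_l.
    + apply continuous_RInt, continuous_f_comp; auto.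
Qed.

Lemma picard_before n t : t <= t0 -> picard n t = y0.
Proof.
  intros H; destruct n; simpl; auto.
  rewrite Rmax_left, RInt_point by lra. unfold zero; simpl; ring.
Qed.

Lemma picard_S n t : t0 <= t -> picard (S n) t = y0 + RInt (fun s => f s (picard n s)) t0 t.
Proof. intros H; simpl; rewrite Rmax_right by lra; auto. Qed.

Definition picard_bound (n : nat) (s : R) :=
  M / L * (L * (s - t0)) ^ (S n) / INR (fact (S n)).

Lemma is_derive_picard_bound n s :
  is_derive (picard_bound (S n)) s (L * picard_bound n s).
Proof.
  unfold picard_bound.
  assert (H : is_derive (fun s => (L * (s - t0)) ^ (S (S n))) s
               (INR (S (S n)) * L * (L * (s - t0)) ^ (S n))).
  { apply (is_derive_pow (fun s => L * (s - t0))). auto_derive; auto; ring. }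
  apply is_derive_scal with (k := M / L) in H.
  apply is_derive_scal with (k := / INR (fact (S (S n)))) in H.
  replace (L * (M / L * (L * (s - t0)) ^ S n / INR (fact (S n))))
    with (/ INR (fact (S (S n))) * (M / L * (INR (S (S n)) * L * (L * (s - t0)) ^ S n))).
  - eapply is_derive_ext; [|apply H]. intros t. cbv beta. unfold Rdiv at 2. apply Rmult_comm.
  - rewrite (fact_simpl (S n)), mult_INR. field.
    repeat split; first [apply INR_fact_neq_0 | lra | (apply not_0_INR; lia)].
Qed.

Lemma picard_bound_start n : picard_bound n t0 = 0.
Proof. unfold picard_bound. rewrite Rminus_eq_0, Rmult_0_r, pow_i by lia. unfold Rdiv; ring. Qed.

Lemma picard_step_le n t : t0 <= t ->
  Rabs (picard (S n) t - picard n t) <= picard_bound n t.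
Proof.
  revert t; induction n; intros t Ht.
  - rewrite picard_S by auto. simpl picard.
    rewrite Rplus_minus_l.
    eapply Rle_trans; [apply abs_RInt_le_const; [lra | apply ex_RInt_cont; auto | intros; apply Hbnd]|].
    unfold picard_bound. simpl. right. field. lra.
  - rewrite !picard_S by auto.
    assert (Hc1 := continuous_f_comp _ (picard_continuous (S n))).
    assert (Hc0 := continuous_f_comp _ (picard_continuous n)).
    assert (Hcb : forall x, continuous (fun s => L * picard_bound n s) x).
    { intros x. apply (ex_derive_continuous (K:=R_AbsRing) (V:=R_NormedModule)).
      unfold picard_bound. auto_derive. auto. }
    rewrite Rminus_plus_l_l, <- (RInt_minus (V:=R_CompleteNormedModule))
      by (apply ex_RInt_cont; auto).
    assert (Hcd : forall x, continuous (fun s => f s (picard (S n) s) - f s (picard n s)) x).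
    { intros x. apply (continuous_minus (fun s => f s (picard (S n) s))); auto. }
    eapply Rle_trans; [apply abs_RInt_le; [lra | apply ex_RInt_cont; auto]|].
    eapply Rle_trans; [apply RInt_le with (g := fun s => L * picard_bound n s); auto|].
    + apply ex_RInt_cont. intros y. apply continuous_comp; [auto | apply continuous_Rabs].
    + apply ex_RInt_cont; auto.
    + intros s Hs. eapply Rle_trans; [apply Hlip|].
      apply Rmult_le_compat_l; [lra|]. apply IHn; lra.
    + right. apply is_RInt_unique.
      replace (picard_bound (S n) t) with (minus (picard_bound (S n) t) (picard_bound (S n) t0))
        by (rewrite picard_bound_start; unfold minus, plus, opp; simpl; ring).
      apply (is_RInt_derive (V:=R_CompleteNormedModule)); intros;
        [apply is_derive_picard_bound | apply Hcb].
Qed.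

Lemma M_nonneg : 0 <= M.
Proof. eapply Rle_trans; [apply Rabs_pos|apply (Hbnd 0 0)]. Qed.

Lemma picard_ucauchy : ucauchy picard.
Proof.
  apply ucauchy_of_series. intros A.
  set (X := L * (Rabs A + Rabs t0)).
  assert (HX : 0 <= X) by (unfold X; pose proof (Rabs_pos A); pose proof (Rabs_pos t0); nra).
  exists (fun n => M / L * (X ^ S n / INR (fact (S n)))). split.
  - apply (ex_series_scal_l (K:=R_AbsRing) (M / L) (fun n => X ^ S n / INR (fact (S n)))).
    apply (ex_series_incr_1 (fun n => X ^ n / INR (fact n))).
    eapply ex_series_ext; [|eexists; apply (is_exp_Reals X)].
    intros n. rewrite pow_n_pow. reflexivity.
  - intros n t Ht. destruct (Rle_dec t t0) as [Hle|Hgt].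
    + rewrite !picard_before, Rminus_eq_0, Rabs_R0 by lra.
      pose proof M_nonneg. apply Rmult_le_pos; [apply Rdiv_le_0_compat; lra|].
      apply Rdiv_le_0_compat; [apply pow_le; auto | apply INR_fact_lt_0].
    + eapply Rle_trans; [apply picard_step_le; lra|]. unfold picard_bound.
      assert (Hp : (L * (t - t0)) ^ S n <= X ^ S n).
      { apply pow_incr. split; [nra|]. unfold X. apply Rmult_le_compat_l; [lra|].
        pose proof (Rle_abs A); pose proof (Rabs_maj2 t0); apply Rabs_le_between in Ht. lra. }
      assert (Hc : 0 <= M / L / INR (fact (S n)))
        by (apply Rdiv_le_0_compat; [apply Rdiv_le_0_compat; [apply M_nonneg|lra]|apply INR_fact_lt_0]).
      unfold Rdiv in *. nra.
Qed.

Definition ode_sol := lim_fun picard.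

Lemma ode_sol_continuous x : continuous ode_sol x.
Proof.
  apply (unif_lim_continuous picard); [apply ucauchy_unif_lim, picard_ucauchy|].
  apply picard_continuous.
Qed.

Lemma ode_sol_init : ode_sol t0 = y0.
Proof.
  unfold ode_sol, lim_fun. rewrite (Lim_seq_ext _ (fun _ => y0)).
  - rewrite Lim_seq_const; reflexivity.
  - intros n; apply picard_before; lra.
Qed.

Lemma ode_sol_inteq a s : t0 <= a <= s ->
  ode_sol s = ode_sol a + RInt (fun r => f r (ode_sol r)) a s.
Proof.
  intros Has.
  assert (Hlim := ucauchy_unif_lim picard picard_ucauchy).
  assert (H0 : forall s, t0 <= s -> ode_sol s = ode_sol t0 + RInt (fun r => f r (ode_sol r)) t0 s).
  { apply (inteq_unif_lim (fun n => picard (n + 1)) picard); auto.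
    - apply unif_lim_shift; auto.
    - apply picard_continuous.
    - intros n s' Hs'. rewrite Nat.add_1_r, !picard_S, RInt_point by lra.
      unfold zero; simpl; ring. }
  assert (Hc := continuous_f_comp _ ode_sol_continuous).
  rewrite (H0 s), (H0 a) by lra.
  rewrite <- (RInt_Chasles (V:=R_CompleteNormedModule) _ t0 a s) by (apply ex_RInt_cont; auto).
  unfold plus; simpl. ring.
Qed.

Lemma ode_sol_deriv x : t0 < x -> is_derive ode_sol x (f x (ode_sol x)).
Proof.
  intros Hx. apply (is_derive_of_inteq ode_sol t0 (ode_sol t0)); auto.
  - apply ode_sol_continuous.
  - intros s Hs. apply ode_sol_inteq; lra.
Qed.

End IntegralEquation.

Lemma exp_le_exp x y : x <= y -> exp x <= exp y.
Proof. intros H. destruct (Req_dec x y) as [->|]; [lra|left; apply exp_increasing; lra]. Qed.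

(* The explicit solution of [theta' = sin theta] through [(0, pi/2)]. *)
Definition theta (t : R) : R := 2 * atan (exp t).

Lemma sin_theta_eq t : sin (theta t) = 2 * exp t / (1 + exp t * exp t).
Proof.
  unfold theta. rewrite sin_2a, sin_atan, cos_atan.
  assert (Hs : 0 < sqrt (1 + (exp t)²)) by (apply sqrt_lt_R0; unfold Rsqr; pose proof (exp_pos t); nra).
  assert (Hs2 : sqrt (1 + (exp t)²) * sqrt (1 + (exp t)²) = 1 + (exp t)²)
    by (apply sqrt_sqrt; unfold Rsqr; nra).
  replace (2 * (exp t / sqrt (1 + (exp t)²)) * (1 / sqrt (1 + (exp t)²)))
    with (2 * exp t / (sqrt (1 + (exp t)²) * sqrt (1 + (exp t)²))) by (field; lra).
  rewrite Hs2. reflexivity.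
Qed.

Lemma is_derive_theta t : is_derive theta t (sin (theta t)).
Proof.
  rewrite sin_theta_eq. unfold theta. auto_derive; auto.
  pose proof (exp_pos t). field. nra.
Qed.

Lemma theta_bounds t : 0 < theta t < PI.
Proof.
  unfold theta. split.
  - pose proof (atan_increasing 0 (exp t) (exp_pos t)). rewrite atan_0 in *; lra.
  - pose proof (atan_bound (exp t)). lra.
Qed.

Lemma sin_theta_pos t : 0 < sin (theta t).
Proof. apply sin_gt_0; apply theta_bounds. Qed.

Lemma sin_theta_le_exp t : sin (theta t) <= 2 * exp t.
Proof.
  rewrite sin_theta_eq. pose proof (exp_pos t).
  apply Rle_trans with (2 * exp t / 1); [|lra].
  unfold Rdiv. apply Rmult_le_compat_l; [lra|]. apply Rinv_le_contravar; nra.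
Qed.

Lemma sin_theta_le_exp_opp t : sin (theta t) <= 2 * exp (- t).
Proof.
  rewrite sin_theta_eq, exp_Ropp. pose proof (exp_pos t).
  apply Rmult_le_reg_r with (exp t * (1 + exp t * exp t)); [nra|].
  field_simplify; nra.
Qed.

Lemma sin_theta_small_m c : 0 < c -> exists T, forall t, t <= T -> sin (theta t) <= c.
Proof.
  intros Hc. exists (ln (c / 2)). intros t Ht.
  eapply Rle_trans; [apply sin_theta_le_exp|].
  assert (exp t <= exp (ln (c / 2))) by (apply exp_le_exp; lra).
  rewrite exp_ln in H by lra. lra.
Qed.

Lemma sin_theta_small_p c : 0 < c -> exists T, forall t, T <= t -> sin (theta t) <= c.
Proof.
  intros Hc. exists (- ln (c / 2)). intros t Ht.
  eapply Rle_trans; [apply sin_theta_le_exp_opp|].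
  assert (exp (- t) <= exp (ln (c / 2))) by (apply exp_le_exp; lra).
  rewrite exp_ln in H by lra. lra.
Qed.

Lemma theta_lim_m : is_lim theta m_infty 0.
Proof.
  unfold theta. replace 0 with (2 * atan 0) by (rewrite atan_0; ring).
  apply (is_lim_comp_continuous exp (fun y => 2 * atan y) m_infty 0).
  - apply is_lim_exp_m.
  - apply (ex_derive_continuous (K:=R_AbsRing) (V:=R_NormedModule)). auto_derive. auto.
Qed.

Lemma theta_lim_p : is_lim theta p_infty PI.
Proof.
  apply (is_lim_ext (fun t => PI - 2 * atan (exp (- t)))).
  { intros t. unfold theta. rewrite exp_Ropp, atan_inv by apply exp_pos. field. }
  assert (H : is_lim (fun t => PI - 2 * atan (exp (- t))) p_infty (PI - 2 * atan 0)).
  2:{ rewrite atan_0, Rmult_0_r, Rminus_0_r in H. exact H. }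
  apply (is_lim_comp_continuous (fun t => exp (- t)) (fun y => PI - 2 * atan y) p_infty 0).
  - apply (is_lim_comp exp (fun t => - t) p_infty 0 m_infty).
    + apply is_lim_exp_m.
    + apply (is_lim_opp (fun t => t) p_infty p_infty). apply is_lim_id.
    + exists 0. intros y _. discriminate.
  - apply (ex_derive_continuous (K:=R_AbsRing) (V:=R_NormedModule)). auto_derive. auto.
Qed.

Lemma sin_lipschitz y z : Rabs (sin y - sin z) <= Rabs (y - z).
Proof.
  destruct (MVT_abs sin cos z y) as [c [Hc _]]; [intros c _; apply derivable_pt_lim_sin|].
  rewrite Hc. pose proof (COS_bound c).
  rewrite <- (Rmult_1_l (Rabs (y - z))) at 2. apply Rmult_le_compat_r; [apply Rabs_pos|].
  apply Rabs_le; lra.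
Qed.

Lemma cos_lipschitz y z : Rabs (cos y - cos z) <= Rabs (y - z).
Proof.
  destruct (MVT_abs cos (fun x => - sin x) z y) as [c [Hc _]]; [intros c _; apply derivable_pt_lim_cos|].
  rewrite Hc. pose proof (SIN_bound c).
  rewrite <- (Rmult_1_l (Rabs (y - z))) at 2. apply Rmult_le_compat_r; [apply Rabs_pos|].
  apply Rabs_le; lra.
Qed.

Lemma cos_ge_3_4 c : Rabs c <= 1/2 -> 3/4 <= cos c.
Proof.
  intros Hc. apply Rabs_le_between in Hc.
  destruct (pre_cos_bound c 0) as [H _]; try lra.
  unfold cos_approx, cos_term in H. simpl in H. nra.
Qed.

Lemma sin_diff_mul_ge y z : Rabs y <= 1/2 -> Rabs z <= 1/2 ->
  3/4 * (y - z)^2 <= (y - z) * (sin y - sin z).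
Proof.
  revert y z.
  assert (Gen : forall y z, Rabs y <= 1/2 -> Rabs z <= 1/2 -> z < y ->
    3/4 * (y - z)^2 <= (y - z) * (sin y - sin z)).
  { intros y z Hy Hz Hzy.
    destruct (MVT_cor2 sin cos z y Hzy) as [c [Hc1 Hc2]]; [intros; apply derivable_pt_lim_sin|].
    rewrite Hc1. assert (3/4 <= cos c).
    { apply cos_ge_3_4. apply Rabs_le_between in Hy, Hz. apply Rabs_le. lra. }
    pose proof (pow2_ge_0 (y - z)). nra. }
  intros y z Hy Hz. destruct (Rtotal_order y z) as [Hlt|[->|Hgt]].
  - replace ((y - z) * (sin y - sin z)) with ((z - y) * (sin z - sin y)) by ring.
    replace ((y - z)^2) with ((z - y)^2) by ring. apply Gen; auto.
  - nra.
  - apply Gen; auto.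
Qed.

Definition gap_energy (u v : R -> R) (k c : R) (t : R) := ((u t - v t)^2 + c) * exp (k * t).

Lemma is_derive_gap_energy (u v : R -> R) du dv k c x :
  is_derive u x du -> is_derive v x dv ->
  is_derive (gap_energy u v k c) x
    (exp (k * x) * (2 * (u x - v x) * (du - dv) + k * ((u x - v x)^2 + c))).
Proof.
  intros Hu Hv. unfold gap_energy. auto_derive.
  - repeat split; first [exists du; exact Hu | exists dv; exact Hv].
  - change (Derive (fun y => u y) x) with (Derive u x).
    change (Derive (fun y => v y) x) with (Derive v x).
    rewrite (is_derive_unique u x du Hu), (is_derive_unique v x dv Hv). ring.
Qed.

Lemma gap_energy_nonincreasing (u v du dv : R -> R) k c s0 s1 : s0 <= s1 ->
  (forall x, continuous u x) -> (forall x, continuous v x) ->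
  (forall x, s0 < x <= s1 -> is_derive u x (du x) /\ is_derive v x (dv x)) ->
  (forall x, s0 < x < s1 -> 2 * (u x - v x) * (du x - dv x) + k * ((u x - v x)^2 + c) <= 0) ->
  gap_energy u v k c s1 <= gap_energy u v k c s0.
Proof.
  intros H01 Hu Hv Hd Hn.
  apply deriv_nonpos_nonincreasing
    with (dh := fun x => exp (k * x) * (2 * (u x - v x) * (du x - dv x) + k * ((u x - v x)^2 + c)));
    auto.
  - unfold gap_energy.
    apply (continuous_mult (K:=R_AbsRing) (fun t => (u t - v t)^2 + c) (fun t => exp (k * t))).
    + apply (continuous_plus (V:=R_NormedModule) (fun t => (u t - v t)^2) (fun _ => c));
        [|apply continuous_const].
      apply (continuous_comp (fun t => u t - v t) (fun y => y ^ 2)).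
      * apply (continuous_minus (V:=R_NormedModule) u v); auto.
      * apply (ex_derive_continuous (K:=R_AbsRing) (V:=R_NormedModule)). auto_derive. auto.
    + apply (ex_derive_continuous (K:=R_AbsRing) (V:=R_NormedModule)). auto_derive. auto.
  - intros x Hx. destruct (Hd x Hx). apply is_derive_gap_energy; auto.
  - intros x Hx. specialize (Hn x Hx). pose proof (exp_pos (k * x)). nra.
Qed.

Section ThetaField.
Variables a E : R.
Hypothesis Ha : 0 < a.
Hypothesis HE : 0 <= E <= 1.

Definition Frhs (lam t y : R) := Theta_rhs a E lam (theta t) y.

Definition Gpert (lam t y : R) :=
  - 2 * a * cos (theta t) * cos y + 2 * a * E * sin (theta t) * sin y + 2 * lam.

Lemma Frhs_eq lam t y : Frhs lam t y = - sin y + sin (theta t) * Gpert lam t y.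
Proof. unfold Frhs, Theta_rhs, Gpert. ring. Qed.

Definition Ka := 2 * a + 2 * a * E.

Lemma Ka_pos : 0 < Ka.
Proof. unfold Ka. nra. Qed.

Lemma Rabs_mult_le x y c d : Rabs x <= c -> Rabs y <= d -> Rabs (x * y) <= c * d.
Proof.
  intros Hx Hy. rewrite Rabs_mult.
  apply Rmult_le_compat; auto; apply Rabs_pos.
Qed.

Lemma Gpert_coeffs t :
  Rabs (- 2 * a * cos (theta t)) <= 2 * a /\ Rabs (2 * a * E * sin (theta t)) <= 2 * a * E.
Proof.
  assert (Hc : Rabs (cos (theta t)) <= 1) by apply Rabs_le, COS_bound.
  assert (Hs : Rabs (sin (theta t)) <= 1) by apply Rabs_le, SIN_bound.
  rewrite !Rabs_mult, (Rabs_left (-2)), (Rabs_right 2), (Rabs_right a), (Rabs_right E) by lra.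
  pose proof (Rmult_le_pos _ _ (Rlt_le _ _ Ha) (proj1 HE)).
  split; [assert (Rabs (cos (theta t)) * a <= a) | assert (Rabs (sin (theta t)) * (a * E) <= a * E)];
    nra.
Qed.

Lemma Gpert_bound lam t y : Rabs (Gpert lam t y) <= Ka + 2 * Rabs lam.
Proof.
  unfold Gpert, Ka. destruct (Gpert_coeffs t) as [H1 H2].
  assert (Rabs (cos y) <= 1) by apply Rabs_le, COS_bound.
  assert (Rabs (sin y) <= 1) by apply Rabs_le, SIN_bound.
  pose proof (Rabs_mult_le _ _ _ _ H1 H).
  pose proof (Rabs_mult_le _ _ _ _ H2 H0).
  eapply Rle_trans; [apply Rabs_triang|].
  eapply Rle_trans; [apply Rplus_le_compat_r, Rabs_triang|].
  rewrite (Rabs_mult 2), (Rabs_right 2) by lra. lra.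
Qed.

Lemma Gpert_lipschitz lam mu t y z :
  Rabs (Gpert lam t y - Gpert mu t z) <= Ka * Rabs (y - z) + 2 * Rabs (lam - mu).
Proof.
  unfold Gpert, Ka.
  replace (- 2 * a * cos (theta t) * cos y + 2 * a * E * sin (theta t) * sin y + 2 * lam -
     (- 2 * a * cos (theta t) * cos z + 2 * a * E * sin (theta t) * sin z + 2 * mu))
   with ((- 2 * a * cos (theta t)) * (cos y - cos z)
         + (2 * a * E * sin (theta t)) * (sin y - sin z) + 2 * (lam - mu)) by ring.
  destruct (Gpert_coeffs t) as [H1 H2].
  pose proof (cos_lipschitz y z). pose proof (sin_lipschitz y z).
  pose proof (Rabs_mult_le _ _ _ _ H1 H).
  pose proof (Rabs_mult_le _ _ _ _ H2 H0).
  eapply Rle_trans; [apply Rabs_triang|].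
  eapply Rle_trans; [apply Rplus_le_compat_r, Rabs_triang|].
  rewrite (Rabs_mult 2), (Rabs_right 2) by lra. lra.
Qed.

Lemma Frhs_lipschitz lam mu t y z :
  Rabs (Frhs lam t y - Frhs mu t z) <= (1 + Ka) * Rabs (y - z) + 2 * Rabs (lam - mu).
Proof.
  rewrite !Frhs_eq.
  replace (- sin y + sin (theta t) * Gpert lam t y - (- sin z + sin (theta t) * Gpert mu t z))
    with (- (sin y - sin z) + sin (theta t) * (Gpert lam t y - Gpert mu t z)) by ring.
  eapply Rle_trans; [apply Rabs_triang|]. rewrite Rabs_Ropp, Rabs_mult.
  pose proof (Gpert_lipschitz lam mu t y z). pose proof (sin_lipschitz y z).
  pose proof (SIN_bound (theta t)). pose proof (sin_theta_pos t).
  rewrite (Rabs_right (sin (theta t))) by lra.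
  pose proof (Rabs_pos (Gpert lam t y - Gpert mu t z)). pose proof (Rabs_pos (lam - mu)).
  pose proof (Rabs_pos (y - z)). pose proof Ka_pos. nra.
Qed.

Lemma Frhs_bound lam t y : Rabs (Frhs lam t y) <= 1 + Ka + 2 * Rabs lam.
Proof.
  rewrite Frhs_eq. eapply Rle_trans; [apply Rabs_triang|]. rewrite Rabs_Ropp, Rabs_mult.
  pose proof (Gpert_bound lam t y). pose proof (SIN_bound (theta t)). pose proof (sin_theta_pos t).
  rewrite (Rabs_right (sin (theta t))) by lra.
  assert (Rabs (sin y) <= 1) by (apply Rabs_le, SIN_bound).
  pose proof (Rabs_pos (Gpert lam t y)). nra.
Qed.

Lemma Frhs_continuous lam y t : continuous (fun s => Frhs lam s y) t.
Proof.
  apply (ex_derive_continuous (K:=R_AbsRing) (V:=R_NormedModule)).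
  unfold Frhs, Theta_rhs. auto_derive.
  assert (ex_derive theta t) by (eexists; apply is_derive_theta). tauto.
Qed.

(* [1 + Ka] is the Lipschitz constant of [Frhs]; the extra [2] absorbs the parameter gap. *)
Definition gap_rate := 2 * (1 + Ka) + 2.

Lemma gap_rate_pos : 0 < gap_rate.
Proof. unfold gap_rate. pose proof Ka_pos. lra. Qed.

Lemma gap_growth_ineq lam mu x u v :
  2 * (u - v) * (Frhs lam x u - Frhs mu x v)
    + - gap_rate * ((u - v)^2 + 2 * (lam - mu)^2 / gap_rate) <= 0.
Proof.
  pose proof gap_rate_pos. pose proof Ka_pos.
  pose proof (Frhs_lipschitz lam mu x u v).
  set (D := u - v) in *. set (dF := Frhs lam x u - Frhs mu x v) in *.
  replace (- gap_rate * (D ^ 2 + 2 * (lam - mu) ^ 2 / gap_rate))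
    with (- (gap_rate * D ^ 2 + 2 * (lam - mu) ^ 2)) by (field; lra).
  assert (2 * D * dF <= 2 * (Rabs D * Rabs dF))
    by (rewrite <- Rabs_mult; pose proof (Rle_abs (D * dF)); lra).
  rewrite <- (pow2_abs D), <- (pow2_abs (lam - mu)). unfold gap_rate.
  pose proof (Rabs_pos D). pose proof (Rabs_pos (lam - mu)).
  pose proof (pow2_ge_0 (Rabs D - Rabs (lam - mu))). nra.
Qed.

(* Where [sin theta] is small and both values are near [0], [- sin] dominates and
   solutions contract towards each other. *)
Lemma gap_contract_ineq lam mu x u v :
  sin (theta x) * Ka <= 1/8 -> Rabs u <= 1/2 -> Rabs v <= 1/2 ->
  2 * (u - v) * (Frhs lam x u - Frhs mu x v) + 1 * ((u - v)^2 - 16 * (lam - mu)^2) <= 0.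
Proof.
  intros Hs Hu Hv. rewrite !Frhs_eq.
  pose proof (sin_diff_mul_ge u v Hu Hv).
  pose proof (Gpert_lipschitz lam mu x u v).
  pose proof (sin_theta_pos x). pose proof (SIN_bound (theta x)).
  set (D := u - v) in *. set (g := Gpert lam x u - Gpert mu x v) in *.
  assert (Hg : 2 * D * (sin (theta x) * g)
               <= 2 * sin (theta x) * Rabs D * (Ka * Rabs D + 2 * Rabs (lam - mu))).
  { apply Rle_trans with (2 * sin (theta x) * (Rabs D * Rabs g)).
    - replace (2 * D * (sin (theta x) * g)) with (2 * sin (theta x) * (D * g)) by ring.
      apply Rmult_le_compat_l; [lra|]. rewrite <- Rabs_mult. apply Rle_abs.
    - rewrite (Rmult_assoc _ (Rabs D)). apply Rmult_le_compat_l; [lra|].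
      apply Rmult_le_compat_l; [apply Rabs_pos | exact H0]. }
  replace (2 * D * (- sin u + sin (theta x) * Gpert lam x u - (- sin v + sin (theta x) * Gpert mu x v)))
    with (- 2 * (D * (sin u - sin v)) + 2 * D * (sin (theta x) * g)) by (unfold D, g; ring).
  rewrite <- (pow2_abs D), <- (pow2_abs (lam - mu)) in *.
  pose proof (Rabs_pos D). pose proof (Rabs_pos (lam - mu)).
  pose proof (pow2_ge_0 (Rabs D / 2 - 4 * Rabs (lam - mu))). nra.
Qed.

Definition Theta_sol_from (lam T0 : R) (u : R -> R) : Prop :=
  (forall x, continuous u x) /\ forall x, T0 < x -> is_derive u x (Frhs lam x (u x)).

Lemma Theta_sol_from_mono lam T0 T1 u : T0 <= T1 ->
  Theta_sol_from lam T0 u -> Theta_sol_from lam T1 u.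
Proof. intros H [Hc Hd]. split; auto. intros x Hx. apply Hd. lra. Qed.

Lemma gap_contract lam mu T0 u v s0 s1 :
  Theta_sol_from lam T0 u -> Theta_sol_from mu T0 v -> T0 <= s0 <= s1 ->
  (forall x, s0 < x < s1 ->
     sin (theta x) * Ka <= 1/8 /\ Rabs (u x) <= 1/2 /\ Rabs (v x) <= 1/2) ->
  ((u s1 - v s1)^2 - 16 * (lam - mu)^2) * exp s1
    <= ((u s0 - v s0)^2 - 16 * (lam - mu)^2) * exp s0.
Proof.
  intros [Hu Hdu] [Hv Hdv] Hs Hsmall.
  assert (H := gap_energy_nonincreasing u v (fun x => Frhs lam x (u x)) (fun x => Frhs mu x (v x))
                 1 (- (16 * (lam - mu)^2)) s0 s1 ltac:(lra) Hu Hv).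
  unfold gap_energy in H. rewrite !Rmult_1_l in H. apply H.
  - intros x Hx. split; [apply Hdu | apply Hdv]; lra.
  - intros x Hx. destruct (Hsmall x Hx) as [H1 [H2 H3]]. apply gap_contract_ineq; auto.
Qed.

Lemma gap_growth lam mu T0 u v s0 s1 :
  Theta_sol_from lam T0 u -> Theta_sol_from mu T0 v -> T0 <= s0 <= s1 ->
  (u s1 - v s1)^2 + 2 * (lam - mu)^2 / gap_rate
    <= ((u s0 - v s0)^2 + 2 * (lam - mu)^2 / gap_rate) * exp (gap_rate * (s1 - s0)).
Proof.
  intros [Hu Hdu] [Hv Hdv] Hs.
  assert (H := gap_energy_nonincreasing u v (fun x => Frhs lam x (u x)) (fun x => Frhs mu x (v x))
                 (- gap_rate) (2 * (lam - mu)^2 / gap_rate) s0 s1 ltac:(lra) Hu Hv).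
  unfold gap_energy in H.
  replace (exp (- gap_rate * s0)) with (exp (gap_rate * (s1 - s0)) * exp (- gap_rate * s1)) in H
    by (rewrite <- exp_plus; f_equal; ring).
  apply Rmult_le_reg_r with (exp (- gap_rate * s1)); [apply exp_pos|].
  rewrite Rmult_assoc. apply H.
  - intros x Hx. split; [apply Hdu | apply Hdv]; lra.
  - intros x Hx. apply gap_growth_ineq.
Qed.

Definition Wn (lam : R) (n : nat) := ode_sol (Frhs lam) (- INR n) 0.

Lemma Frhs_lipschitz_y lam t y z : Rabs (Frhs lam t y - Frhs lam t z) <= (1 + Ka) * Rabs (y - z).
Proof.
  pose proof (Frhs_lipschitz lam lam t y z).
  rewrite Rminus_eq_0, Rabs_R0 in H. lra.
Qed.

Lemma Wn_sol lam n : Theta_sol_from lam (- INR n) (Wn lam n).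
Proof.
  assert (HL : 0 < 1 + Ka) by (pose proof Ka_pos; lra).
  split; intros x.
  - apply (ode_sol_continuous _ _ HL (Frhs_lipschitz_y lam) (Frhs_continuous lam) _ (Frhs_bound lam)).
  - apply (ode_sol_deriv _ _ HL (Frhs_lipschitz_y lam) (Frhs_continuous lam) _ (Frhs_bound lam)).
Qed.

Lemma Wn_init lam n : Wn lam n (- INR n) = 0.
Proof. apply ode_sol_init. Qed.

Lemma Wn_inteq lam n t s : - INR n <= t <= s ->
  Wn lam n s = Wn lam n t + RInt (fun r => Frhs lam r (Wn lam n r)) t s.
Proof.
  assert (HL : 0 < 1 + Ka) by (pose proof Ka_pos; lra).
  apply (ode_sol_inteq _ _ HL (Frhs_lipschitz_y lam) (Frhs_continuous lam) _ (Frhs_bound lam)).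
Qed.

Section BoundedParameter.
Variable Lam : R.
Hypothesis HLam : 0 <= Lam.

Definition Kb := Ka + 2 * Lam.

Lemma pert_bound lam t y : Rabs lam <= Lam ->
  Rabs (sin (theta t) * Gpert lam t y) <= sin (theta t) * Kb.
Proof.
  intros Hl. rewrite Rabs_mult. pose proof (sin_theta_pos t).
  rewrite (Rabs_right (sin (theta t))) by lra.
  apply Rmult_le_compat_l; [lra|]. pose proof (Gpert_bound lam t y). unfold Kb. lra.
Qed.

(* Barriers: where [sin theta * Kb < sin eps], the field points into the strips around [0] and [-pi]. *)
Lemma sol_stays_small lam T0 T u eps : Rabs lam <= Lam -> Theta_sol_from lam T0 u ->
  (forall t, T0 < t <= T -> sin (theta t) * Kb < sin eps) -> Rabs (u T0) < eps ->
  forall t, T0 <= t <= T -> Rabs (u t) < eps.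
Proof.
  intros Hl [Hc Hd] HT H0 t Ht. apply Rabs_lt_between in H0. apply Rabs_def1.
  - apply (stays_below u (fun x => Frhs lam x (u x)) T0 T eps); auto; try lra.
    + intros x Hx; apply Hd; lra.
    + intros x Hx Hux. rewrite Hux, Frhs_eq.
      pose proof (pert_bound lam x eps Hl) as Hb. apply Rabs_le_between in Hb.
      specialize (HT x Hx). lra.
  - apply (stays_above u (fun x => Frhs lam x (u x)) T0 T (- eps)); auto; try lra.
    + intros x Hx; apply Hd; lra.
    + intros x Hx Hux. rewrite Hux, Frhs_eq, sin_neg.
      pose proof (pert_bound lam x (- eps) Hl) as Hb. apply Rabs_le_between in Hb.
      specialize (HT x Hx). lra.
Qed.

Lemma sol_stays_above lam T0 u eta : Rabs lam <= Lam -> Theta_sol_from lam T0 u ->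
  (forall t, T0 < t -> sin (theta t) * Kb < sin eta) -> - PI + eta < u T0 ->
  forall t, T0 <= t -> - PI + eta < u t.
Proof.
  intros Hl [Hc Hd] HT H0 t Ht.
  apply (stays_above u (fun x => Frhs lam x (u x)) T0 t (- PI + eta)); auto; try lra.
  - intros x Hx; apply Hd; lra.
  - intros x Hx Hux. rewrite Hux, Frhs_eq.
    replace (- PI + eta) with (- (PI - eta)) by ring. rewrite sin_neg, sin_PI_x.
    pose proof (pert_bound lam x (- (PI - eta)) Hl) as Hb. apply Rabs_le_between in Hb.
    specialize (HT x ltac:(lra)). lra.
Qed.

Lemma sol_stays_below lam T0 u eta : Rabs lam <= Lam -> Theta_sol_from lam T0 u ->
  (forall t, T0 < t -> sin (theta t) * Kb < sin eta) -> u T0 < - PI - eta ->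
  forall t, T0 <= t -> u t < - PI - eta.
Proof.
  intros Hl [Hc Hd] HT H0 t Ht.
  apply (stays_below u (fun x => Frhs lam x (u x)) T0 t (- PI - eta)); auto; try lra.
  - intros x Hx; apply Hd; lra.
  - intros x Hx Hux. rewrite Hux, Frhs_eq.
    replace (- PI - eta) with (- (eta + PI)) by ring. rewrite sin_neg, neg_sin.
    pose proof (pert_bound lam x (- (eta + PI)) Hl) as Hb. apply Rabs_le_between in Hb.
    specialize (HT x ltac:(lra)). lra.
Qed.

Lemma Kb_pos : 0 < Kb.
Proof. unfold Kb. pose proof Ka_pos. lra. Qed.

(* Before [Tc], [sin theta <= 2 exp t] is small enough for both the barrier at [1/2]
   and the contraction estimate. *)
Definition Tc := ln (/ (16 * Kb)).

Lemma sin_theta_Kb_le t : t <= Tc -> sin (theta t) * Kb <= 1/8.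
Proof.
  intros Ht. pose proof Kb_pos.
  assert (exp t <= / (16 * Kb)).
  { rewrite <- (exp_ln (/ (16 * Kb))) by (apply Rinv_0_lt_compat; lra). apply exp_le_exp, Ht. }
  pose proof (sin_theta_le_exp t).
  apply Rle_trans with (2 * exp t * Kb); [apply Rmult_le_compat_r; lra|].
  apply Rle_trans with (2 * / (16 * Kb) * Kb); [apply Rmult_le_compat_r; lra|].
  right. field. lra.
Qed.

Lemma sin_half_ge : 3/8 <= sin (1/2).
Proof.
  pose proof (sin_diff_mul_ge (1/2) 0).
  rewrite sin_0, Rabs_R0, Rabs_right in H by lra. lra.
Qed.

Lemma Wn_half lam n t : Rabs lam <= Lam -> - INR n <= t <= Tc -> Rabs (Wn lam n t) < 1/2.
Proof.
  intros Hl Ht.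
  apply (sol_stays_small lam (- INR n) Tc (Wn lam n) (1/2) Hl (Wn_sol lam n)); [| |lra].
  - intros x Hx. pose proof (sin_theta_Kb_le x ltac:(lra)). pose proof sin_half_ge. lra.
  - rewrite Wn_init, Rabs_R0. lra.
Qed.

Lemma sin_theta_Ka_le t : t <= Tc -> sin (theta t) * Ka <= 1/8.
Proof.
  intros Ht. pose proof (sin_theta_Kb_le t Ht). pose proof (sin_theta_pos t).
  unfold Kb in H. nra.
Qed.

Lemma Rabs_le_of_sqr x e : 0 <= e -> x^2 <= e^2 -> Rabs x <= e.
Proof.
  intros He H. rewrite <- (pow2_abs x) in H. pose proof (Rabs_pos x).
  apply Rnot_lt_le; intro Hlt. nra.
Qed.

Lemma nat_large (r c : R) : 0 < c ->
  exists N, forall m, (N <= m)%nat -> r <= INR m /\ exp (- INR m) <= c.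
Proof.
  intros Hc. destruct (INR_unbounded (Rmax r (- ln c))) as [N HN].
  exists N. intros m Hm. apply le_INR in Hm.
  pose proof (Rmax_l r (- ln c)). pose proof (Rmax_r r (- ln c)).
  split; [lra|]. rewrite <- (exp_ln c) by lra. apply exp_le_exp. lra.
Qed.

Lemma Wn_gap_early lam m n t : Rabs lam <= Lam -> (m <= n)%nat -> - INR m <= t <= Tc ->
  (Wn lam n t - Wn lam m t)^2 * exp t <= exp (- INR m) / 4.
Proof.
  intros Hl Hmn Ht. assert (Hnm : - INR n <= - INR m) by (apply Ropp_le_contravar, le_INR; auto).
  assert (Hg := gap_contract lam lam (- INR m) (Wn lam n) (Wn lam m) (- INR m) t
    (Theta_sol_from_mono _ _ _ _ Hnm (Wn_sol lam n)) (Wn_sol lam m) ltac:(lra)).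
  rewrite Rminus_eq_0, Wn_init, pow_i, Rmult_0_r, !Rminus_0_r in Hg by lia.
  assert (H0 : Rabs (Wn lam n (- INR m)) < 1/2) by (apply Wn_half; auto; lra).
  assert (Wn lam n (- INR m) ^ 2 <= 1/4)
    by (rewrite <- pow2_abs; pose proof (Rabs_pos (Wn lam n (- INR m))); nra).
  pose proof (exp_pos (- INR m)).
  eapply Rle_trans; [apply Hg|nra]. intros x Hx. repeat split.
  - apply sin_theta_Ka_le; lra.
  - left; apply Wn_half; auto; lra.
  - left; apply Wn_half; auto; lra.
Qed.

Lemma Wn_gap_sq_le lam m n t : Rabs lam <= Lam -> (m <= n)%nat -> - INR m <= Tc -> - INR m <= t ->
  (Wn lam n t - Wn lam m t)^2 <= exp (- INR m) / 4 * exp ((1 + gap_rate) * (Rabs t + Rabs Tc)).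
Proof.
  intros Hl Hmn HTc Ht. pose proof gap_rate_pos.
  pose proof (Rle_abs t). pose proof (Rabs_maj2 t). pose proof (Rle_abs Tc). pose proof (Rabs_maj2 Tc).
  pose proof (Rabs_pos t). pose proof (Rabs_pos Tc). pose proof (exp_pos (- INR m)).
  destruct (Rle_dec t Tc) as [HtT|HtT].
  - assert (Hearly := Wn_gap_early lam m n t Hl Hmn ltac:(lra)).
    apply Rmult_le_reg_r with (exp t); [apply exp_pos|].
    eapply Rle_trans; [exact Hearly|].
    rewrite Rmult_assoc, <- exp_plus.
    pose proof (exp_ineq1_le ((1 + gap_rate) * (Rabs t + Rabs Tc) + t)).
    assert (0 <= (1 + gap_rate) * (Rabs t + Rabs Tc) + t) by nra.
    nra.
  - assert (Hnm : - INR n <= - INR m) by (apply Ropp_le_contravar, le_INR; auto).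
    assert (Hearly := Wn_gap_early lam m n Tc Hl Hmn ltac:(lra)).
    assert (Hgrowth := gap_growth lam lam (- INR m) (Wn lam n) (Wn lam m) Tc t
      (Theta_sol_from_mono _ _ _ _ Hnm (Wn_sol lam n)) (Wn_sol lam m) ltac:(lra)).
    rewrite Rminus_eq_0, pow_i, Rmult_0_r, Rdiv_0_l, !Rplus_0_r in Hgrowth by lia.
    eapply Rle_trans; [exact Hgrowth|].
    assert (exp (- Tc) * exp (gap_rate * (t - Tc)) <= exp ((1 + gap_rate) * (Rabs t + Rabs Tc)))
      by (rewrite <- exp_plus; apply exp_le_exp;
          pose proof (Rmult_le_pos gap_rate (Rabs t + Rabs Tc - (t - Tc)) ltac:(lra) ltac:(lra));
          lra).
    assert (HTc2 : (Wn lam n Tc - Wn lam m Tc) ^ 2 <= exp (- INR m) / 4 * exp (- Tc)).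
    { apply Rmult_le_reg_r with (exp Tc); [apply exp_pos|].
      rewrite Rmult_assoc, <- exp_plus, Rplus_opp_l, exp_0, Rmult_1_r. exact Hearly. }
    apply Rle_trans with (exp (- INR m) / 4 * exp (- Tc) * exp (gap_rate * (t - Tc))).
    + apply Rmult_le_compat_r; [left; apply exp_pos | exact HTc2].
    + rewrite Rmult_assoc. apply Rmult_le_compat_l; lra.
Qed.

Lemma Wn_ucauchy lam : Rabs lam <= Lam -> ucauchy (Wn lam).
Proof.
  intros Hl A eps Heps.
  set (C := exp ((1 + gap_rate) * (Rabs A + Rabs Tc)) / 4).
  assert (HC : 0 < C) by (unfold C; pose proof (exp_pos ((1 + gap_rate) * (Rabs A + Rabs Tc))); lra).
  destruct (nat_large (Rmax A (- Tc)) (eps^2 / C)) as [N HN];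
    [apply Rdiv_lt_0_compat; nra|].
  assert (Main : forall m n, (N <= m)%nat -> (m <= n)%nat -> forall t, Rabs t <= A ->
    Rabs (Wn lam n t - Wn lam m t) <= eps).
  { intros m n Hm Hmn t Ht. destruct (HN m Hm) as [H1 H2].
    pose proof (Rmax_l A (- Tc)). pose proof (Rmax_r A (- Tc)).
    pose proof (proj1 (Rabs_le_between _ _) Ht). pose proof gap_rate_pos.
    apply Rabs_le_of_sqr; [lra|].
    eapply Rle_trans; [apply Wn_gap_sq_le; auto; lra|].
    assert (HB : exp ((1 + gap_rate) * (Rabs t + Rabs Tc)) <= 4 * C).
    { unfold C. replace (4 * (exp ((1 + gap_rate) * (Rabs A + Rabs Tc)) / 4))
        with (exp ((1 + gap_rate) * (Rabs A + Rabs Tc))) by field.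
      apply exp_le_exp, Rmult_le_compat_l; [lra|]. pose proof (Rle_abs A). lra. }
    assert (exp (- INR m) * C <= eps ^ 2).
    { apply Rmult_le_reg_r with (/ C); [apply Rinv_0_lt_compat; lra|].
      rewrite Rmult_assoc, Rinv_r, Rmult_1_r by lra. exact H2. }
    pose proof (exp_pos (- INR m)). nra. }
  exists N. intros n m Hn Hm t Ht. destruct (Nat.le_ge_cases m n) as [Hmn|Hmn].
  - apply Main; auto.
  - rewrite Rabs_minus_sym. apply Main; auto.
Qed.

Definition W (lam : R) := lim_fun (Wn lam).

Lemma W_lim_seq lam t : Rabs lam <= Lam -> is_lim_seq (fun n => Wn lam n t) (W lam t).
Proof. intros Hl. apply ucauchy_lim, Wn_ucauchy, Hl. Qed.

Lemma W_continuous lam x : Rabs lam <= Lam -> continuous (W lam) x.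
Proof.
  intros Hl. apply (unif_lim_continuous (Wn lam)).
  - apply ucauchy_unif_lim, Wn_ucauchy, Hl.
  - intros n. apply Wn_sol.
Qed.

Lemma W_deriv lam x : Rabs lam <= Lam -> is_derive (W lam) x (Frhs lam x (W lam x)).
Proof.
  intros Hl. destruct (INR_unbounded (1 - x)) as [m Hm].
  assert (HL : 0 < 1 + Ka) by (pose proof Ka_pos; lra).
  apply (is_derive_of_inteq _ _ HL (Frhs_lipschitz_y lam) (Frhs_continuous lam) _ (x - 1) (W lam (x - 1)));
    [intros; apply W_continuous; auto | | lra].
  assert (Hlim := unif_lim_shift _ _ m (ucauchy_unif_lim _ (Wn_ucauchy lam Hl))).
  apply (inteq_unif_lim _ _ HL (Frhs_lipschitz_y lam) (Frhs_continuous lam)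
    (fun n => Wn lam (n + m)) (fun n => Wn lam (n + m))); auto.
  - intros n. apply Wn_sol.
  - intros n s Hs. apply Wn_inteq. rewrite plus_INR. pose proof (pos_INR n). lra.
Qed.

Lemma W_sol lam T0 : Rabs lam <= Lam -> Theta_sol_from lam T0 (W lam).
Proof. intros Hl. split; intros x; [|intros _]; [apply W_continuous | apply W_deriv]; auto. Qed.

Lemma W_small lam eps T : Rabs lam <= Lam -> 0 < eps ->
  (forall t, t <= T -> sin (theta t) * Kb < sin eps) -> forall t, t <= T -> Rabs (W lam t) <= eps.
Proof.
  intros Hl He HT t Ht. destruct (INR_unbounded (- t)) as [N HN].
  apply (Rabs_lim_seq_le _ _ _ (W_lim_seq lam t Hl)). exists N. intros n Hn.
  apply le_INR in Hn. left.
  apply (sol_stays_small lam (- INR n) T (Wn lam n) eps Hl (Wn_sol lam n)); [| |lra].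
  - intros x Hx. apply HT. lra.
  - rewrite Wn_init, Rabs_R0. lra.
Qed.

Lemma sin_theta_Kb_small_m eta : 0 < sin eta ->
  exists T, forall t, t <= T -> sin (theta t) * Kb < sin eta.
Proof.
  intros Hs. pose proof Kb_pos.
  destruct (sin_theta_small_m (sin eta / (2 * Kb))) as [T HT]; [apply Rdiv_lt_0_compat; lra|].
  exists T. intros t Ht. specialize (HT t Ht).
  apply Rle_lt_trans with (sin eta / (2 * Kb) * Kb); [apply Rmult_le_compat_r; lra|].
  replace (sin eta / (2 * Kb) * Kb) with (sin eta / 2) by (field; lra). lra.
Qed.

Lemma sin_theta_Kb_small_p eta : 0 < sin eta ->
  exists T, forall t, T <= t -> sin (theta t) * Kb < sin eta.
Proof.
  intros Hs. pose proof Kb_pos.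
  destruct (sin_theta_small_p (sin eta / (2 * Kb))) as [T HT]; [apply Rdiv_lt_0_compat; lra|].
  exists T. intros t Ht. specialize (HT t Ht).
  apply Rle_lt_trans with (sin eta / (2 * Kb) * Kb); [apply Rmult_le_compat_r; lra|].
  replace (sin eta / (2 * Kb) * Kb) with (sin eta / 2) by (field; lra). lra.
Qed.

Lemma W_lim_m lam : Rabs lam <= Lam -> is_lim (W lam) m_infty 0.
Proof.
  intros Hl. apply is_lim_spec. intros eps. pose proof (cond_pos eps).
  set (e := Rmin (eps / 2) 1).
  assert (He : 0 < e <= eps / 2) by (unfold e; split; [apply Rmin_glb_lt|apply Rmin_l]; lra).
  assert (Hse : 0 < sin e).
  { apply sin_gt_0; [lra|]. pose proof (Rmin_r (eps / 2) 1). pose proof PI2_3_2. fold e in H0. lra. }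
  destruct (sin_theta_Kb_small_m e Hse) as [T HT].
  exists T. intros t Ht. rewrite Rminus_0_r.
  assert (Rabs (W lam t) <= e) by (apply (W_small lam e T); auto; lra). lra.
Qed.

Lemma W_is_Wminus lam : Rabs lam <= Lam -> is_Wminus a E lam theta (W lam).
Proof.
  intros Hl. split; [|split; [|split]].
  - intros t. split; [apply is_derive_theta | apply W_deriv, Hl].
  - intros t. apply theta_bounds.
  - apply theta_lim_m.
  - apply W_lim_m, Hl.
Qed.

Lemma Wn_param_gap_early lam mu n s : Rabs lam <= Lam -> Rabs mu <= Lam -> - INR n <= s <= Tc ->
  (Wn lam n s - Wn mu n s)^2 <= 16 * (lam - mu)^2.
Proof.
  intros Hl Hm Hs.
  assert (Hg := gap_contract lam mu (- INR n) (Wn lam n) (Wn mu n) (- INR n) s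
    (Wn_sol lam n) (Wn_sol mu n) ltac:(lra)).
  rewrite !Wn_init, Rminus_eq_0, pow_i, Rminus_0_l in Hg by lia.
  assert (((Wn lam n s - Wn mu n s) ^ 2 - 16 * (lam - mu) ^ 2) * exp s <= 0).
  { eapply Rle_trans; [apply Hg|].
    - intros x Hx. repeat split; [apply sin_theta_Ka_le; lra | |]; left; apply Wn_half; auto; lra.
    - pose proof (exp_pos (- INR n)). pose proof (pow2_ge_0 (lam - mu)). nra. }
  pose proof (exp_pos s). nra.
Qed.

Definition param_const (T : R) := (16 + 2 / gap_rate) * exp (gap_rate * Rabs (T - Tc)).

Lemma Wn_param_gap lam mu n T : Rabs lam <= Lam -> Rabs mu <= Lam ->
  - INR n <= Tc -> - INR n <= T ->
  (Wn lam n T - Wn mu n T)^2 <= param_const T * (lam - mu)^2.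
Proof.
  intros Hl Hm HTc HT. pose proof gap_rate_pos.
  assert (H2 : 0 <= 2 * (lam - mu)^2 / gap_rate)
    by (apply Rdiv_le_0_compat; [pose proof (pow2_ge_0 (lam - mu))|]; lra).
  assert (H1 : 1 <= exp (gap_rate * Rabs (T - Tc))).
  { pose proof (exp_ineq1_le (gap_rate * Rabs (T - Tc))).
    pose proof (Rmult_le_pos _ _ (Rlt_le _ _ H) (Rabs_pos (T - Tc))). lra. }
  unfold param_const. replace ((16 + 2 / gap_rate) * exp (gap_rate * Rabs (T - Tc)) * (lam - mu)^2)
    with ((16 * (lam - mu)^2 + 2 * (lam - mu)^2 / gap_rate) * exp (gap_rate * Rabs (T - Tc)))
    by (field; lra).
  destruct (Rle_dec T Tc) as [HTT|HTT].
  - pose proof (Wn_param_gap_early lam mu n T Hl Hm ltac:(lra)).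
    pose proof (pow2_ge_0 (lam - mu)). nra.
  - assert (Hg := gap_growth lam mu (- INR n) (Wn lam n) (Wn mu n) Tc T
      (Wn_sol lam n) (Wn_sol mu n) ltac:(lra)).
    pose proof (Wn_param_gap_early lam mu n Tc Hl Hm ltac:(lra)).
    rewrite Rabs_right by lra. pose proof (exp_pos (gap_rate * (T - Tc))). nra.
Qed.

Lemma W_param_lipschitz lam mu T : Rabs lam <= Lam -> Rabs mu <= Lam ->
  Rabs (W lam T - W mu T) <= sqrt (param_const T) * Rabs (lam - mu).
Proof.
  intros Hl Hm.
  assert (Hc : 0 <= param_const T).
  { unfold param_const. pose proof gap_rate_pos.
    apply Rmult_le_pos; [|left; apply exp_pos]. pose proof (Rdiv_lt_0_compat 2 _ Rlt_0_2 H). lra. }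
  apply (Rabs_lim_seq_le (fun n => Wn lam n T - Wn mu n T)).
  - apply is_lim_seq_minus'; apply W_lim_seq; auto.
  - destruct (nat_large (Rmax (- T) (- Tc)) 1 Rlt_0_1) as [N HN]. exists N. intros n Hn.
    destruct (HN n Hn) as [H1 _]. pose proof (Rmax_l (- T) (- Tc)). pose proof (Rmax_r (- T) (- Tc)).
    apply Rabs_le_of_sqr; [apply Rmult_le_pos; [apply sqrt_pos | apply Rabs_pos]|].
    rewrite Rpow_mult_distr, pow2_abs, pow2_sqrt by exact Hc.
    apply Wn_param_gap; auto; lra.
Qed.

Lemma trap_scale eta : 0 < eta ->
  exists e, 0 < e /\ 2 * e <= eta /\ exists T, forall t, T <= t -> sin (theta t) * Kb < sin e.
Proof.
  intros Heta. set (e := Rmin eta PI / 2).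
  pose proof (Rmin_l eta PI). pose proof (Rmin_r eta PI). pose proof PI_RGT_0.
  assert (He : 0 < e) by (unfold e; assert (0 < Rmin eta PI) by (apply Rmin_glb_lt; lra); lra).
  assert (Hse : 0 < sin e) by (apply sin_gt_0; unfold e in *; lra).
  exists e. repeat split; [lra | unfold e; lra | apply sin_theta_Kb_small_p, Hse].
Qed.

Lemma W_param_near l T g : Rabs l <= Lam -> 0 < g -> exists r, 0 < r /\
  forall mu, Rabs mu <= Lam -> Rabs (mu - l) < r -> Rabs (W mu T - W l T) < g.
Proof.
  intros Hl Hg. set (C := sqrt (param_const T)). pose proof (sqrt_pos (param_const T)).
  exists (g / (C + 1)). split; [apply Rdiv_lt_0_compat; fold C in H; lra|].
  intros mu Hmu Hr. eapply Rle_lt_trans; [apply W_param_lipschitz; auto|]. fold C.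
  apply Rle_lt_trans with (C * (g / (C + 1))); [apply Rmult_le_compat_l; fold C in H; lra|].
  replace (C * (g / (C + 1))) with (g - g / (C + 1)) by (field; fold C in H; lra).
  assert (0 < g / (C + 1)) by (apply Rdiv_lt_0_compat; fold C in H; lra). lra.
Qed.

Lemma W_eventually_above_open l : Rabs l <= Lam -> eventually_above (W l) (- PI) ->
  exists r, 0 < r /\ forall mu, Rabs mu <= Lam -> Rabs (mu - l) < r -> eventually_above (W mu) (- PI).
Proof.
  intros Hl [eta [Heta [T0 HT0]]].
  destruct (trap_scale eta Heta) as [e [He [Hee [T1 HT1]]]].
  set (T := Rmax T0 T1).
  destruct (W_param_near l T e Hl He) as [r [Hr Hnear]].
  exists r. split; auto. intros mu Hmu Hd. exists e. split; auto. exists T.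
  apply (sol_stays_above mu T (W mu) e Hmu (W_sol mu T Hmu)).
  - intros t Ht. apply HT1. pose proof (Rmax_r T0 T1). fold T in H. lra.
  - specialize (HT0 T (Rmax_l _ _)). specialize (Hnear mu Hmu Hd).
    apply Rabs_lt_between in Hnear. lra.
Qed.

Lemma W_eventually_below_open l : Rabs l <= Lam -> eventually_below (W l) (- PI) ->
  exists r, 0 < r /\ forall mu, Rabs mu <= Lam -> Rabs (mu - l) < r -> eventually_below (W mu) (- PI).
Proof.
  intros Hl [eta [Heta [T0 HT0]]].
  destruct (trap_scale eta Heta) as [e [He [Hee [T1 HT1]]]].
  set (T := Rmax T0 T1).
  destruct (W_param_near l T e Hl He) as [r [Hr Hnear]].
  exists r. split; auto. intros mu Hmu Hd. exists e. split; auto. exists T.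
  apply (sol_stays_below mu T (W mu) e Hmu (W_sol mu T Hmu)).
  - intros t Ht. apply HT1. pose proof (Rmax_r T0 T1). fold T in H. lra.
  - specialize (HT0 T (Rmax_l _ _)). specialize (Hnear mu Hmu Hd).
    apply Rabs_lt_between in Hnear. lra.
Qed.

Lemma W_lim_p_of_not_eventually l : Rabs l <= Lam ->
  ~ eventually_above (W l) (- PI) -> ~ eventually_below (W l) (- PI) ->
  is_lim (W l) p_infty (- PI).
Proof.
  intros Hl Nabove Nbelow. apply is_lim_spec. intros eps.
  destruct (trap_scale eps (cond_pos eps)) as [e [He [Hee [T HT]]]].
  exists T. intros x Hx.
  assert (HTx : forall t, x < t -> sin (theta t) * Kb < sin e) by (intros t Ht; apply HT; lra).
  assert (W l x <= - PI + e).
  { apply Rnot_lt_le; intro Hlt. apply Nabove. exists e. split; auto. exists x.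
    apply (sol_stays_above l x (W l) e Hl (W_sol l x Hl) HTx Hlt). }
  assert (- PI - e <= W l x).
  { apply Rnot_lt_le; intro Hlt. apply Nbelow. exists e. split; auto. exists x.
    apply (sol_stays_below l x (W l) e Hl (W_sol l x Hl) HTx Hlt). }
  apply Rabs_lt_between. lra.
Qed.

Lemma W_omega_lim l k : Rabs l <= Lam -> corridor_K1 a E l k ->
  is_lim (W l) p_infty (- 2 * PI * IZR k).
Proof. intros Hl [_ [_ Hom]]. apply (Hom theta (W l) (W_is_Wminus l Hl)). Qed.

Lemma saddles_connector_of_not_eventually l : Rabs l <= Lam ->
  ~ eventually_above (W l) (- PI) -> ~ eventually_below (W l) (- PI) ->
  saddles_connector a E l.
Proof.
  intros Hl Nabove Nbelow. destruct (W_is_Wminus l Hl) as [Htraj [_ Halpha]].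
  exists theta, (W l). split; [exact Htraj|]. split; [exact Halpha|].
  split; [apply theta_lim_p | apply W_lim_p_of_not_eventually; auto].
Qed.

End BoundedParameter.

End ThetaField.

Theorem corollary1 (a E lam1 lam2 : R) :
  0 < a < 1 / 2 -> 0 <= E <= 1 ->
  lam1 < lam2 -> lam2 < 0 ->
  corridor_K1 a E lam2 0%Z ->
  (exists k : Z, (1 <= k)%Z /\ corridor_K1 a E lam1 k) ->
  exists lam, lam1 < lam < lam2 /\ saddles_connector a E lam.
Proof.
  intros [Ha _] HE H12 H2 C2 [k [Hk C1]].
  set (Lam := Rabs lam1 + Rabs lam2).
  assert (HLam : 0 <= Lam) by (unfold Lam; pose proof (Rabs_pos lam1); pose proof (Rabs_pos lam2); lra).
  assert (Inb : forall l, lam1 <= l <= lam2 -> Rabs l <= Lam)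
    by (intros l Hl; unfold Lam; rewrite !Rabs_left by lra; lra).
  pose proof PI_RGT_0.
  destruct (interval_not_covered (fun l => eventually_below (W a E l) (- PI))
              (fun l => eventually_above (W a E l) (- PI)) lam1 lam2) as [l [Hl [Nb Na]]].
  - lra.
  - apply (eventually_below_of_lim _ _ _ (W_omega_lim a E Ha HE Lam HLam lam1 k (Inb lam1 ltac:(lra)) C1)).
    assert (1 <= IZR k) by (apply IZR_le; auto). nra.
  - apply (eventually_above_of_lim _ _ _ (W_omega_lim a E Ha HE Lam HLam lam2 0 (Inb lam2 ltac:(lra)) C2)).
    simpl. lra.
  - intros l _ Hb Ha'. exact (eventually_above_below _ _ Ha' Hb).
  - intros l Hl Hb. destruct (W_eventually_below_open a E Ha HE Lam HLam l (Inb l Hl) Hb)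
      as [r [Hr Hop]]. exists r. split; [exact Hr|]. intros m Hm. apply Hop, Inb, Hm.
  - intros l Hl Hb. destruct (W_eventually_above_open a E Ha HE Lam HLam l (Inb l Hl) Hb)
      as [r [Hr Hop]]. exists r. split; [exact Hr|]. intros m Hm. apply Hop, Inb, Hm.
  - exists l. split; [lra|].
    apply (saddles_connector_of_not_eventually a E Ha HE Lam HLam l (Inb l ltac:(lra)) Na Nb).
Qed.
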